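(* Let $L\subseteq\Sigma^*$ be a regular language. Then the following are equivalent: (1) $V_L(n)\in O(\log n)$; (2) $|\Sigma^{\le n}/{\approx_L}|$ is polynomially bounded in $n$; (3) the Myhill–Nerode right congruence $\sim_L$ has no critical tuple.
   Context: $\sim_L$ is the Myhill–Nerode right congruence: $x\sim_L y$ iff $\{z: xz\in L\}=\{z:yz\in L\}$. For an equivalence $\sim$ on $\Sigma^*$, its suffix expansion $\approx$ is defined by $a_1\cdots a_n\approx b_1\cdots b_m$ iff $n=m$ and $a_i\cdots a_n\sim b_i\cdots b_n$ for all $1\le i\le n$; $\approx_L$ is the suffix expansion of $\sim_L$, and $\Sigma^{\le n}/{\approx_L}$ is the set of $\approx_L$-classes of words of length at most $n$. A critical tuple in a right congruence $\sim$ is a tuple $(u_2,v_2,u,v)$ of words with $|u_2|=|v_2|\ge1$, $u=u_1u_2$ and $v=v_1v_2$ for some words $u_1,v_1$, and $u_2w\not\sim v_2w$ for all $w\in\{u,v\}^*$. $V_L(n)$ is the variable-size sliding window space complexity of $L$: with $\overline\Sigma=\Sigma\cup\{\downarrow\}$, the active window is $\mathrm{wnd}(\varepsilon)=\varepsilon$, $\mathrm{wnd}(ua)=\mathrm{wnd}(u)a$ ($a\in\Sigma$), $\mathrm{wnd}(u\downarrow)=\varepsilon$ if $\mathrm{wnd}(u)=\varepsilon$ and $=v$ if $\mathrm{wnd}(u)=av$. A variable-size sliding window algorithm for $L$ is a deterministic (possibly infinite-state) automaton over $\overline\Sigma$ whose states are bit strings, outputting after each prefix whether the current window is in $L$; its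 space complexity at $n$ is the maximal bit-string length of states reached on inputs whose window never exceeds length $n$; $V_L(n)$ is the space complexity of a space-optimal such algorithm (which exists). *)

From mathcomp Require Import all_boot.
From mathcomp Require Import boolp.

Set Implicit Arguments.
Unset Strict Implicit.
Unset Printing Implicit Defensive.

Section Defs.
Variable Sigma : finType.
Notation word := (seq Sigma).

Definition regular (L : pred word) : Prop :=
  exists (Q : finType) (q0 : Q) (delta : Q -> Sigma -> Q) (F : pred Q),
    forall w, L w = F (foldl delta q0 w).

Definition MN (L : pred word) (x y : word) : Prop :=
  forall z, L (x ++ z) = L (y ++ z).

(* suffix expansion of an equivalence: a_1..a_n ≈ b_1..b_m iff n = m and
   a_i..a_n ~ b_i..b_n for all 1 <= i <= n (suffix from position i = drop (i-1)) *)
Definition suffix_expansion (sim : word -> word -> Prop) (x y : word) : Prop :=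
  size x = size y /\ forall i, i < size x -> sim (drop i x) (drop i y).

Definition approxL (L : pred word) := suffix_expansion (MN L).

Definition words_upto (n : nat) : seq word :=
  flatten [seq [seq tval t | t : k.-tuple Sigma] | k <- iota 0 n.+1].

(* Each word w is mapped to its class (as the sublist of words_upto n that are
   ≈_L-equivalent to w); we count the distinct classes. *)
Definition num_approx_classes (L : pred word) (n : nat) : nat :=
  let W := words_upto n in
  size (undup [seq [seq v <- W | `[< approxL L w v >]] | w <- W]).

Definition in_star (u v w : word) : Prop :=
  exists s : seq bool, w = flatten [seq if b then u else v | b <- s].

Definition critical_tuple (sim : word -> word -> Prop) (u2 v2 u v : word) : Prop :=
  [/\ size u2 = size v2, 0 < size u2,
      exists u1, u = u1 ++ u2,
      exists v1, v = v1 ++ v2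
    & forall w, in_star u v w -> ~ sim (u2 ++ w) (v2 ++ w)].

(* extended alphabet: Some a for a in Sigma, None for the symbol ↓ *)
Definition wnd_step (x : word) (c : option Sigma) : word :=
  match c with
  | Some a => rcons x a
  | None => behead x   (* behead [::] = [::] *)
  end.

Definition wnd (u : seq (option Sigma)) : word := foldl wnd_step [::] u.

(* deterministic (possibly infinite-state) automaton over option Sigma whose
   states are bit strings, with initial state and set of final states *)
Record sw_algorithm := SWAlg {
  sw_init : seq bool;
  sw_delta : seq bool -> option Sigma -> seq bool;
  sw_final : pred (seq bool)
}.

Definition sw_run (A : sw_algorithm) (u : seq (option Sigma)) : seq bool :=
  foldl (sw_delta A) (sw_init A) u.

(* A is a variable-size sliding window algorithm for L: after every prefix
   (i.e. on every input) it outputs whether the active window is in L *)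
Definition is_sw_algorithm (L : pred word) (A : sw_algorithm) : Prop :=
  forall u, sw_final A (sw_run A u) = L (wnd u).

Definition window_bounded (n : nat) (u : seq (option Sigma)) : Prop :=
  forall k, size (wnd (take k u)) <= n.

Definition space_le (A : sw_algorithm) (n s : nat) : Prop :=
  forall u, window_bounded n u -> size (sw_run A u) <= s.

(* V_L(n) <= s : V_L(n) is the space complexity of a space-optimal algorithm,
   i.e. the pointwise minimum over all sliding window algorithms for L of
   their space complexity at n. *)
Definition VL_le (L : pred word) (n s : nat) : Prop :=
  exists A, is_sw_algorithm L A /\ space_le A n s.

Definition VL_in_O_log (L : pred word) : Prop :=
  exists c N, forall n, N <= n -> VL_le L n (c * trunc_log 2 n).

Definition approx_poly_bounded (L : pred word) : Prop :=
  exists c d, forall n, num_approx_classes L n <= c * n.+1 ^ d.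

Definition no_critical_tuple (sim : word -> word -> Prop) : Prop :=
  ~ exists u2 v2 u v, critical_tuple sim u2 v2 u v.

End Defs.

(* Everything is governed by the number of ≈_L-classes.  An algorithm that
   stores only the ≈_L-class of its window, written in binary, is correct since
   ≈_L is a congruence both for appending a letter and for dropping the first
   one; conversely, the states a correct algorithm reaches on the words of
   length at most n separate their ≈_L-classes.  Hence V_L(n) = O(log n) iff
   there are polynomially many classes.

   A critical tuple (u2, v2, u, v) makes the 2^m words made of m blocks uv or vu
   pairwise inequivalent: at the last block where two of them differ, suitable
   suffixes read u2 w and v2 w with w in {u,v}^*.

   Without critical tuples, fix a DFA for L.  If y t and t induce the same
   transformation of the states, y can be replaced by any y' of the same length
   and transformation without leaving the ≈_L-class of y t (pump y to an
   idempotent power).  Splitting off the longest suffix a w' of w inducing the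
   same transformation as w strictly shrinks the set of transformations of
   suffixes, so every word is equivalent to a normal form made of at most
   |Q^Q| + 1 canonical blocks, and there are polynomially many of those. *)

From mathcomp Require Import all_boot.
From mathcomp Require Import boolp.
From mathcomp Require Import zify.
From Stdlib Require Import PArith.

Set Implicit Arguments.
Unset Strict Implicit.
Unset Printing Implicit Defensive.

Lemma leq_exp2rW m n e : m <= n -> m ^ e <= n ^ e.
Proof. by move=> lemn; case: e => // e; rewrite leq_exp2r. Qed.

Lemma size_flatten_map_le (T : eqType) (U : Type) (f : T -> seq U) (s : seq T) B :
  {in s, forall x, size (f x) <= B} -> size (flatten (map f s)) <= size s * B.
Proof.
elim: s => //= x s IHs fB; rewrite size_cat mulSn leq_add ?fB ?mem_head //.
by apply: IHs => y sy; rewrite fB // inE sy orbT.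
Qed.

Lemma size_undup_map_le (T U V : eqType) (f : T -> U) (g : T -> V) (s : seq T) :
  {in s &, forall x y, g x = g y -> f x = f y} ->
  size (undup (map f s)) <= size (undup (map g s)).
Proof.
elim: s => //= x s IHs fg.
have {}IHs : size (undup (map f s)) <= size (undup (map g s)).
  by apply: IHs => y z sy sz; apply: fg; rewrite inE ?sy ?sz orbT.
case: ifP => fx; case: ifP => gx /=; rewrite ?ltnS ?IHs ?(leqW IHs) //.
case/mapP: gx => y sy gxy; move: fx.
by rewrite (fg x y) ?mem_head ?inE ?sy ?orbT // map_f.
Qed.

(** * Counting ≈_L-classes *)

Section Approx.
Variables (Sigma : finType) (L : pred (seq Sigma)).
Local Notation word := (seq Sigma).
Local Notation W n := (words_upto Sigma n).

Lemma MN_sym x y : MN L x y -> MN L y x. Proof. by move=> xy z; rewrite xy. Qed.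

Lemma MN_trans x y z : MN L x y -> MN L y z -> MN L x z.
Proof. by move=> xy yz w; rewrite xy yz. Qed.

Lemma MN_catr x y t : MN L x y -> MN L (x ++ t) (y ++ t).
Proof. by move=> xy z; rewrite -!catA xy. Qed.

Lemma approx_refl x : approxL L x x. Proof. by split. Qed.

Lemma approx_sym x y : approxL L x y -> approxL L y x.
Proof. by case=> sxy xy; split=> // i; rewrite -sxy => /xy /MN_sym. Qed.

Lemma approx_trans x y z : approxL L x y -> approxL L y z -> approxL L x z.
Proof.
case=> sxy xy [syz yz]; split=> [|i ix]; first by rewrite sxy.
by apply: MN_trans (xy _ ix) (yz _ _); rewrite -sxy.
Qed.

Lemma approx_mem x y : approxL L x y -> L x = L y.
Proof.
case=> sxy xy; case: x sxy xy => [|a x] sxy xy; first by case: y sxy {xy}.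
by have := xy 0 isT [::]; rewrite !drop0 !cats0.
Qed.

Lemma approx_wnd_step x y c : approxL L x y -> approxL L (wnd_step x c) (wnd_step y c).
Proof.
case=> sxy xy; case: c => [a|] /=; split; rewrite ?size_rcons ?size_behead ?sxy //.
  move=> i; rewrite ltnS leq_eqVlt => /orP[/eqP-> | ltiy].
    by rewrite -{1}sxy !drop_rcons // !drop_size.
  have [leix leiy] : i <= size x /\ i <= size y by rewrite sxy ltnW.
  by rewrite (drop_rcons leix) (drop_rcons leiy) -!cats1; apply/MN_catr/xy; rewrite sxy.
by move=> i ltiy; rewrite -!drop1 !drop_drop; apply: xy; rewrite sxy; lia.
Qed.

Definition approx_class n (w : word) := [seq v <- W n | `[< approxL L w v >]].

Lemma mem_words_upto n w : (w \in W n) = (size w <= n).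
Proof.
apply/flatten_mapP/idP => [[k] | lewn].
  by rewrite mem_iota add0n ltnS => /andP[_ lekn] /imageP[t _ ->]; rewrite size_tuple.
exists (size w); first by rewrite mem_iota add0n ltnS.
by apply/imageP; exists (Tuple (eqxx (size w))).
Qed.

Lemma num_approx_classesE n :
  num_approx_classes L n = size (undup (map (approx_class n) (W n))).
Proof. by []. Qed.

Lemma approx_class_self n w : size w <= n -> w \in approx_class n w.
Proof. by move=> lewn; rewrite mem_filter mem_words_upto lewn andbT; apply/asboolP/approx_refl. Qed.

Lemma approx_of_mem_class n w v : v \in approx_class n w -> approxL L w v.
Proof. by rewrite mem_filter => /andP[/asboolP]. Qed.

Lemma approx_class_eq n x y : approxL L x y -> approx_class n x = approx_class n y.
Proof.
move=> xy; apply: eq_filter => v; apply/asboolP/asboolP; last exact: approx_trans.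
exact/approx_trans/approx_sym.
Qed.

Lemma num_approx_classes_le_cover n (C : seq word) :
  (forall w, size w <= n -> exists2 c, c \in C & approxL L w c) ->
  num_approx_classes L n <= size C.
Proof.
move=> cover; rewrite num_approx_classesE -(size_map (approx_class n) C).
apply: uniq_leq_size => [|cl]; first exact: undup_uniq.
rewrite mem_undup => /mapP[w Ww ->]; rewrite mem_words_upto in Ww.
by have [c Cc /(approx_class_eq n)->] := cover w Ww; apply: map_f.
Qed.

Lemma num_approx_classes_le_map (V : eqType) n (g : word -> V) :
  {in W n &, forall x y, g x = g y -> approxL L x y} ->
  num_approx_classes L n <= size (undup (map g (W n))).
Proof.
move=> gW; rewrite num_approx_classesE; apply: size_undup_map_le => x y Wx Wy.
by move/gW => /(_ Wx Wy) /approx_class_eq.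
Qed.

Lemma card_le_num_approx_classes n (T : finType) (f : T -> word) :
  (forall x, size (f x) <= n) -> (forall x y, approxL L (f x) (f y) -> x = y) ->
  #|T| <= num_approx_classes L n.
Proof.
move=> fn finj; rewrite num_approx_classesE cardE -(size_map (approx_class n \o f)).
apply: uniq_leq_size => [|_ /mapP[x _ ->]].
  rewrite map_inj_uniq ?enum_uniq // => x y /= fxy.
  by apply: finj; apply: (@approx_of_mem_class n); rewrite fxy approx_class_self.
by rewrite mem_undup /= map_f // mem_words_upto.
Qed.

End Approx.

(** * Polynomially many classes give logarithmic space *)

(* The leading bit 1 of a positive number is left implicit. *)
Fixpoint bits_of_pos (p : positive) : seq bool :=
  match p with
  | xH => [::]
  | xO p => false :: bits_of_pos p
  | xI p => true :: bits_of_pos p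
  end.

Fixpoint pos_of_bits (b : seq bool) : positive :=
  match b with
  | [::] => xH
  | false :: b => xO (pos_of_bits b)
  | true :: b => xI (pos_of_bits b)
  end.

Lemma bits_of_posK : cancel bits_of_pos pos_of_bits.
Proof. by elim=> //= p ->. Qed.

Lemma exp2_size_bits_of_pos p : 2 ^ size (bits_of_pos p) <= Pos.to_nat p.
Proof. by elim: p => [p IHp|p IHp|] //=; rewrite ?Pos2Nat.inj_xI ?Pos2Nat.inj_xO expnS; lia. Qed.

Definition bits_of_nat k := bits_of_pos (Pos.of_succ_nat k).
Definition nat_of_bits b := (Pos.to_nat (pos_of_bits b)).-1.

Lemma bits_of_natK : cancel bits_of_nat nat_of_bits.
Proof. by move=> k; rewrite /nat_of_bits /bits_of_nat bits_of_posK SuccNat2Pos.id_succ. Qed.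

Lemma exp2_size_bits_of_nat k : 2 ^ size (bits_of_nat k) <= k.+1.
Proof. by have := exp2_size_bits_of_pos (Pos.of_succ_nat k); rewrite SuccNat2Pos.id_succ. Qed.

Lemma leq_trunc_log2_of_poly c d n s : 1 < n -> 2 ^ s.-1 <= c * n.+1 ^ d ->
  s <= (1 + c + 2 * d) * trunc_log 2 n.
Proof.
move=> lt1n; set t := trunc_log 2 n => bound.
have t_gt0 : 0 < t by rewrite /t trunc_log_gt0.
have n_lt : n.+1 <= 2 ^ t.+1 := trunc_log_ltn n (isT : 1 < 2).
have : 2 ^ s.-1 <= 2 ^ (c + t.+1 * d).
  rewrite (leq_trans bound) // expnD expnM leq_mul ?leq_exp2rW //.
  exact/ltnW/ltn_expl.
by rewrite leq_exp2l //; nia.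
Qed.

Section ClassAlgorithm.
Variables (Sigma : finType) (L : pred (seq Sigma)) (n : nat).
Local Notation word := (seq Sigma).
Local Notation classes := (undup (map (approx_class L n) (words_upto Sigma n))).

(* Windows longer than [n] are stored verbatim; this keeps the algorithm
   correct on all inputs without affecting its space at [n]. *)
Definition class_encode (x : word) : seq bool :=
  if size x <= n then false :: bits_of_nat (index (approx_class L n x) classes)
  else true :: nseq (pickle x) true.

Definition class_decode (s : seq bool) : word :=
  match s with
  | false :: b => head [::] (nth [::] classes (nat_of_bits b))
  | true :: b => odflt [::] (unpickle (size b))
  | [::] => [::]
  end.

Lemma class_decode_encode x : approxL L (class_decode (class_encode x)) x.
Proof.
rewrite /class_encode; case: ifP => lexn; cbn [class_decode]; last first.
  by rewrite size_nseq pickleK; exact: approx_refl.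
have xcl : approx_class L n x \in classes by rewrite mem_undup map_f // mem_words_upto.
rewrite bits_of_natK nth_index //; apply/approx_sym/(@approx_of_mem_class _ _ n).
by move: (approx_class_self L lexn); case: (approx_class L n x) => //= c cs _; apply: mem_head.
Qed.

Definition class_algorithm : sw_algorithm Sigma :=
  SWAlg (class_encode [::]) (fun s c => class_encode (wnd_step (class_decode s) c))
        (fun s => L (class_decode s)).

Lemma class_algorithm_run u :
  exists2 x, sw_run class_algorithm u = class_encode x & approxL L x (wnd u).
Proof.
elim/last_ind: u => [|u c [x runx xu]]; first by exists [::]; last exact: approx_refl.
exists (wnd_step (class_decode (sw_run class_algorithm u)) c); first by rewrite /sw_run foldl_rcons.
rewrite /wnd foldl_rcons -/(wnd u) runx.
exact/approx_wnd_step/(approx_trans (class_decode_encode x)).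
Qed.

Lemma class_algorithm_correct : is_sw_algorithm L class_algorithm.
Proof.
move=> u; have [x -> xu] := class_algorithm_run u.
exact: approx_mem (approx_trans (class_decode_encode x) xu).
Qed.

Lemma class_algorithm_space u : window_bounded n u ->
  2 ^ (size (sw_run class_algorithm u)).-1 <= num_approx_classes L n.
Proof.
move/(_ (size u)); rewrite take_size => wnd_n.
have [x -> [sx _]] := class_algorithm_run u.
rewrite /class_encode sx wnd_n /= (leq_trans (exp2_size_bits_of_nat _)) //.
by rewrite num_approx_classesE index_mem mem_undup map_f // mem_words_upto sx.
Qed.

End ClassAlgorithm.

Lemma poly_bounded_VL_in_O_log (Sigma : finType) (L : pred (seq Sigma)) :
  approx_poly_bounded L -> VL_in_O_log L.
Proof.
case=> c [d poly]; exists (1 + c + 2 * d), 2 => n le2n.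
exists (class_algorithm L n); split=> [|u un]; first exact: class_algorithm_correct.
exact: leq_trunc_log2_of_poly le2n (leq_trans (class_algorithm_space L un) (poly n)).
Qed.

(** * Logarithmic space gives polynomially many classes *)

Lemma size_words_upto (T : finType) n : 0 < #|T| ->
  size (words_upto T n) <= n.+1 * #|T| ^ n.
Proof.
move=> T_gt0; rewrite -[n.+1](size_iota 0); apply: size_flatten_map_le => k.
by rewrite mem_iota add0n ltnS => kn; rewrite size_image card_tuple leq_pexp2l.
Qed.

Lemma log_space_count_le_poly c n :
  n.+1 * ((c * trunc_log 2 n).+1 * 2 ^ (c * trunc_log 2 n)) <= n.+1 ^ c.*2.+1.
Proof.
have exp_t : 2 ^ trunc_log 2 n <= n.+1.
  case: (posnP n) => [-> | n_gt0]; first by rewrite trunc_log0.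
  exact/leqW/trunc_logP.
set t := trunc_log 2 n in exp_t *.
rewrite expnS leq_mul2l (leq_trans (leq_mul (ltn_expl _ (isT : 1 < 2)) (leqnn _))) ?orbT //.
by rewrite -expnD addnn doubleMl mulnC expnM leq_exp2rW.
Qed.

Section SpaceLowerBound.
Variables (Sigma : finType) (L : pred (seq Sigma)).
Local Notation word := (seq Sigma).

Lemma wnd_step_letters (x z : word) : foldl (@wnd_step Sigma) x (map Some z) = x ++ z.
Proof. by elim: z x => [|a z IHz] x /=; rewrite ?cats0 // IHz cat_rcons. Qed.

Lemma wnd_step_pops (x : word) i : foldl (@wnd_step Sigma) x (nseq i None) = drop i x.
Proof. by elim: i x => [|i IHi] x /=; rewrite ?drop0 // IHi -drop1 drop_drop addn1. Qed.

Lemma sw_algorithm_separates A x y : is_sw_algorithm L A -> size x = size y ->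
  sw_run A (map Some x) = sw_run A (map Some y) -> approxL L x y.
Proof.
move=> AL sxy runxy; split=> // i _ z.
have wndE w : wnd (map Some w ++ nseq i None ++ map Some z) = drop i w ++ z.
  by rewrite /wnd !foldl_cat wnd_step_letters wnd_step_pops wnd_step_letters.
by rewrite -!wndE -!AL /sw_run !foldl_cat -!/(sw_run A _) runxy.
Qed.

Lemma num_approx_classes_le_space A n s : is_sw_algorithm L A -> space_le A n s ->
  num_approx_classes L n <= n.+1 * (s.+1 * 2 ^ s).
Proof.
move=> AL As.
pose g w := (size w, sw_run A (map Some w)).
apply: leq_trans (num_approx_classes_le_map (g := g) _) _.
  by move=> x y _ _ [sxy runxy]; exact: sw_algorithm_separates runxy.
pose states := [seq (k, b) | k <- iota 0 n.+1, b <- words_upto bool s].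
apply: (@leq_trans (size states)).
  apply: uniq_leq_size => [|p]; first exact: undup_uniq.
  rewrite mem_undup => /mapP[w]; rewrite mem_words_upto => wn ->.
  rewrite allpairs_f // ?mem_iota ?mem_words_upto ?ltnS //.
  apply: As => k; rewrite -map_take /wnd wnd_step_letters size_take_min.
  exact: leq_trans (geq_minr _ _) wn.
rewrite size_allpairs size_iota leq_mul2l.
by have := @size_words_upto bool s; rewrite card_bool => /(_ isT) ->; rewrite orbT.
Qed.

End SpaceLowerBound.

Lemma VL_in_O_log_poly_bounded (Sigma : finType) (L : pred (seq Sigma)) :
  VL_in_O_log L -> approx_poly_bounded L.
Proof.
case=> c [N VL]; exists (\max_(m < N) num_approx_classes L m).+1, c.*2.+1 => n.
case: (ltnP n N) => [ltnN | leNn].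
  apply: (@leq_trans (\max_(m < N) num_approx_classes L m)).
    exact: (leq_bigmax (F := fun m : 'I_N => num_approx_classes L m) (Ordinal ltnN)).
  by rewrite ltnW // leq_pmulr // expn_gt0.
have [A [AL As]] := VL n leNn.
apply: leq_trans (num_approx_classes_le_space AL As) _.
exact: leq_trans (log_space_count_le_poly c n) (leq_pmull _ _).
Qed.

(** * Critical tuples give exponentially many classes *)

Lemma exists_linear_lt_exp2 a b : exists j, a + b * j < 2 ^ j.
Proof.
set t := a + b.*2; exists t.*2.
have lt_t : t < 2 ^ t := ltn_expl t (isT : 1 < 2).
rewrite -addnn expnD (@leq_ltn_trans (t + t * t)) //.
  by rewrite leq_add ?leq_addr // addnn -doubleMr doubleMl leq_mul2r leq_addl orbT.
by apply: leq_trans (leq_mul lt_t lt_t); rewrite mulSn mulnS; lia.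
Qed.

Lemma exists_poly_lt_exp2 c d : exists m, c * m.+1 ^ d < 2 ^ m.
Proof.
have [j lt_j] := exists_linear_lt_exp2 (c + d) d.
exists (2 ^ j); apply: (@leq_ltn_trans (2 ^ (c + d + d * j))); last by rewrite ltn_exp2l.
rewrite -addnA expnD leq_mul ?(ltnW (ltn_expl c (isT : 1 < 2))) //.
rewrite -mulnS mulnC expnM leq_exp2rW //.
by rewrite expnS mul2n -addnn -addn1 leq_add2l expn_gt0.
Qed.

Section CriticalTuple.
Variables (Sigma : finType) (L : pred (seq Sigma)) (u2 v2 u v : seq Sigma).
Hypothesis crit : critical_tuple (MN L) u2 v2 u v.

Definition block (b : bool) := if b then u ++ v else v ++ u.
Definition blocks (bs : seq bool) := flatten (map block bs).

Lemma size_block b : size (block b) = size u + size v.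
Proof. by case: b; rewrite size_cat // addnC. Qed.

Lemma size_blocks bs : size (blocks bs) = size bs * (size u + size v).
Proof. by elim: bs => //= b bs IHbs; rewrite size_cat IHbs size_block mulSn. Qed.

Lemma blocks_in_star bs : in_star u v (blocks bs).
Proof.
exists (flatten [seq [:: b; ~~ b] | b <- bs]).
by elim: bs => //= b bs IH; rewrite -IH catA; case: b.
Qed.

Lemma drop_block b : drop (size u + size v - size u2) (block b) = if b then v2 else u2.
Proof.
rewrite /block; case: crit => su2v2 _ [u1 ->] [v1 ->] _.
by case: b; rewrite catA drop_size_cat // !size_cat; lia.
Qed.

Lemma last_difference (bs bs' : seq bool) : size bs = size bs' -> bs != bs' ->
  exists p p' b r, [/\ size p = size p', bs = p ++ b :: r & bs' = p' ++ ~~ b :: r].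
Proof.
elim/last_ind: bs bs' => [|bs b IHbs] bs'; first by case: bs'.
case/lastP: bs' => [|bs' b']; first by rewrite size_rcons.
rewrite !size_rcons => /eqP; rewrite eqSS => /eqP sbs neq.
case: (eqVneq b b') => [eqb | neqb].
  have [|p [p' [c [r [sp -> ->]]]]] := IHbs bs' sbs.
    by apply: contraNneq neq => ->; rewrite eqb.
  by exists p, p', c, (rcons r b); rewrite -eqb -!rcons_cons -!rcons_cat.
by exists bs, bs', b, [::]; rewrite -!cats1; case: b b' neqb {neq} => [] [].
Qed.

Lemma blocks_not_approx bs bs' : size bs = size bs' ->
  approxL L (blocks bs) (blocks bs') -> bs = bs'.
Proof.
move=> sbs [_]; apply: contraPeq => /(last_difference sbs).
case=> p [p' [b [r [sp -> ->]]]] approx.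
have [su2v2 u2_gt0 [u1 eq_u] _ noMN] := crit.
set i := size (blocks p) + (size u + size v - size u2).
have drop_i q c : size q = size p ->
    drop i (blocks (q ++ c :: r)) = (if c then v2 else u2) ++ blocks r.
  move=> sq; rewrite /i /blocks map_cat flatten_cat -/(blocks q) -/(blocks p).
  rewrite size_blocks -sq -size_blocks addnC -drop_drop drop_size_cat //= drop_cat.
  by rewrite size_block ifT ?drop_block // eq_u size_cat; lia.
have lt_i : i < size (blocks (p ++ b :: r)).
  by rewrite -subn_gt0 -size_drop drop_i // size_cat; case: (b); rewrite -?su2v2 ltn_addr.
move: (approx i lt_i); rewrite !drop_i //.
by case: (b) => /=; [move/MN_sym|]; apply: noMN (blocks_in_star r).
Qed.

Lemma exp2_le_num_approx_classes m :
  2 ^ m <= num_approx_classes L (m * (size u + size v)).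
Proof.
rewrite -card_bool -card_tuple.
apply: (card_le_num_approx_classes (f := fun t : m.-tuple bool => blocks t)).
  by move=> t; rewrite size_blocks size_tuple.
by move=> t t' /blocks_not_approx; rewrite !size_tuple => /(_ erefl) /val_inj.
Qed.

Lemma critical_tuple_not_poly_bounded : ~ approx_poly_bounded L.
Proof.
case=> c [d poly]; set K := size u + size v.
have [m lt_m] := exists_poly_lt_exp2 (c * K.+1 ^ d) d.
have := leq_trans (exp2_le_num_approx_classes m) (poly _).
apply/negP; rewrite -ltnNge; apply: leq_ltn_trans lt_m.
by rewrite -mulnA -expnMn leq_mul2l leq_exp2rW ?orbT // -/K; nia.
Qed.

End CriticalTuple.

(** * Without critical tuples: normal forms *)

Lemma exists_idempotent_multiple (T : finType) (f : nat -> T) :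
  (forall a a' b, f a = f a' -> f (a + b) = f (a' + b)) ->
  exists2 k, 0 < k & f (k + k) = f k.
Proof.
move=> f_congr.
have /injectivePn[i [j neqij fij]] : ~~ injectiveb (fun i : 'I_#|T|.+1 => f i).
  by apply/injectiveP => /leq_card; rewrite card_ord ltnn.
wlog ltij : i j neqij fij / i < j.
  move=> gen; case: (ltngtP i j) => [|ltji|/val_inj eqij]; first exact: gen.
    by apply: (gen j i); rewrite // eq_sym.
  by rewrite eqij eqxx in neqij.
set p := j - i.
have period d : i <= d -> f (d + p) = f d.
  move=> leid; rewrite -(subnKC leid) addnAC (subnKC (ltnW ltij)).
  exact: f_congr (esym fij).
have periods d k : i <= d -> f (d + k * p) = f d.
  move=> leid; elim: k => [|k IHk]; first by rewrite addn0.
  by rewrite mulSnr addnA period ?IHk // (leq_trans leid) ?leq_addr.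
exists (i.+1 * p); first by rewrite muln_gt0 subn_gt0.
by rewrite periods // (leq_trans (leqnSn i)) // leq_pmulr // subn_gt0.
Qed.

Section Transformations.
Variables (Sigma Q : finType) (delta : Q -> Sigma -> Q).
Local Notation word := (seq Sigma).

Definition tr (w : word) : {ffun Q -> Q} := [ffun q => foldl delta q w].

Lemma trE w q : tr w q = foldl delta q w. Proof. exact: ffunE. Qed.

Lemma tr_cat_congr x x' z z' : tr x = tr x' -> tr z = tr z' -> tr (x ++ z) = tr (x' ++ z').
Proof. by move=> xx' zz'; apply/ffunP=> q; rewrite !trE !foldl_cat -!trE xx' zz'. Qed.

Definition wpow (y : word) k := flatten (nseq k y).

Lemma wpowD y a b : wpow y (a + b) = wpow y a ++ wpow y b.
Proof. by rewrite /wpow nseqD flatten_cat. Qed.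

Lemma tr_wpow_idempotent y : exists2 k, 0 < k & tr (wpow y (k + k)) = tr (wpow y k).
Proof.
apply: (@exists_idempotent_multiple _ (fun k => tr (wpow y k))) => a a' b eq_a.
by rewrite !wpowD; apply: tr_cat_congr.
Qed.

Lemma tr_wpow_absorb y t m : tr (y ++ t) = tr t -> tr (wpow y m ++ t) = tr t.
Proof. by move=> yt; elim: m => //= m IHm; rewrite -catA (tr_cat_congr (erefl (tr y)) IHm). Qed.

Lemma tr_star X Y s : tr Y = tr X -> tr (X ++ X) = tr X -> s != [::] ->
  tr (flatten [seq if b then X else Y | b <- s]) = tr X.
Proof.
move=> YX XX; elim: s => //= b s IHs _; have bX : tr (if b then X else Y) = tr X by case: b.
case: (eqVneq s [::]) => [-> | /IHs sX]; first by rewrite cats0.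
by rewrite -XX; apply: tr_cat_congr.
Qed.

Definition tr_witness k (m : {ffun Q -> Q}) : word :=
  if [pick t : k.-tuple Sigma | tr t == m] is Some t then tval t else [::].

Lemma tr_witnessP w :
  size (tr_witness (size w) (tr w)) = size w /\ tr (tr_witness (size w) (tr w)) = tr w.
Proof.
rewrite /tr_witness; case: pickP => [t /eqP -> | none]; first by rewrite size_tuple.
by move: (none (Tuple (eqxx (size w)))); rewrite /= eqxx.
Qed.

Definition suffix_trs (w : word) : {set {ffun Q -> Q}} :=
  [set tr (drop i w) | i : 'I_(size w).+1].

Lemma mem_suffix_trs w i : i <= size w -> tr (drop i w) \in suffix_trs w.
Proof. by move=> leiw; apply/imsetP; exists (Ordinal (leiw : i < (size w).+1)). Qed.

Lemma card_suffix_trs_gt0 w : 0 < #|suffix_trs w|.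
Proof. by apply/card_gt0P; exists (tr (drop 0 w)); apply: mem_suffix_trs. Qed.

Lemma absorbing_split w : tr w = tr [::] \/
  exists y a w', [/\ w = y ++ a :: w', tr (a :: w') = tr w
                   & #|suffix_trs w'| < #|suffix_trs w|].
Proof.
pose P j := (j <= size w) && (tr (drop j w) == tr w).
have exP : exists j, P j by exists 0; rewrite /P drop0 eqxx.
have ubP j : P j -> j <= size w by case/andP.
have [j0 /andP[lej0 /eqP trj0] maxj0] := ex_maxnP exP ubP.
case: (ltnP j0 (size w)) => [ltj0 | gej0]; last by left; rewrite -trj0 drop_oversize.
right; case def_w' : (drop j0 w) => [|a w'].
  by move: ltj0; rewrite -subn_gt0 -size_drop def_w'.
have dropE i : drop i w' = drop (i + j0.+1) w.
  by rewrite -drop_drop -[j0.+1]add1n -drop_drop def_w' /= drop0.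
have sw' : size w' = size w - j0.+1 by rewrite -[w']drop0 dropE size_drop.
exists (take j0 w), a, w'; split; rewrite -?def_w' ?cat_take_drop //.
apply/proper_card/properP; split.
  apply/subsetP => _ /imsetP[i _ ->]; rewrite dropE mem_suffix_trs //.
  by have := ltn_ord i; lia.
exists (tr w); first by rewrite -[w in tr w]drop0 mem_suffix_trs.
apply/imsetP => -[i _ /esym]; rewrite dropE => tri.
by have := maxj0 (i + j0.+1); rewrite /P tri eqxx andbT; have := ltn_ord i; lia.
Qed.

End Transformations.

Section NoCriticalTuple.
Variables (Sigma Q : finType) (q0 : Q) (delta : Q -> Sigma -> Q) (F : pred Q).
Variable L : pred (seq Sigma).
Hypothesis dfaL : forall w, L w = F (foldl delta q0 w).
Hypothesis nocrit : no_critical_tuple (MN L).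
Local Notation word := (seq Sigma).
Local Notation tr := (tr delta).
Local Notation M := {ffun Q -> Q}.

Lemma MN_catl_tr p a b : tr a = tr b -> MN L (p ++ a) (p ++ b).
Proof. by move=> ab z; rewrite !dfaL -!catA !foldl_cat -!trE ab. Qed.

Lemma approx_catl_tr z a b : approxL L a b -> tr a = tr b -> approxL L (z ++ a) (z ++ b).
Proof.
case=> sab ab trab; split=> [|i]; first by rewrite !size_cat sab.
rewrite size_cat !drop_cat; case: ifP => [_ _ | lezi ltiza]; first exact: MN_catl_tr.
by apply: ab; move: lezi ltiza; lia.
Qed.

Lemma MN_drop_idempotent X Y i : size X = size Y -> tr X = tr Y -> tr (X ++ X) = tr X ->
  i < size X -> MN L (drop i X ++ X) (drop i Y ++ X).
Proof.
move=> sXY XY XX ltiX; apply: contrapT => notMN; apply: nocrit.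
exists (drop i X), (drop i Y), X, Y; split.
- by rewrite !size_drop sXY.
- by rewrite size_drop subn_gt0.
- by exists (take i X); rewrite cat_take_drop.
- by exists (take i Y); rewrite cat_take_drop.
move=> _ [s ->]; case: (eqVneq s [::]) => [-> /(MN_catr X) | s0 MNs]; first by rewrite !cats0.
apply: notMN; have sX := tr_star (esym XY) XX s0.
by apply: MN_trans (MN_trans _ MNs) _; apply: MN_catl_tr; rewrite sX.
Qed.

(* Pump [y] to an idempotent power [X]; then the absence of critical tuples
   applies to [(drop i X, drop i Y, X, Y)] with [Y = y' ++ y^(k-1)]. *)
Lemma approx_absorbed y y' t : tr (y ++ t) = tr t -> size y' = size y -> tr y' = tr y ->
  approxL L (y ++ t) (y' ++ t).
Proof.
move=> absorb syy' tryy'; split=> [|i]; first by rewrite !size_cat syy'.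
rewrite size_cat !drop_cat syy' => _; case: ifP => // ltiy.
have [k k_gt0 idem] := tr_wpow_idempotent delta y.
set X := wpow y k; set Y := y' ++ wpow y k.-1.
have eqX : X = y ++ wpow y k.-1 by rewrite /X -(prednK k_gt0).
have XX : tr (X ++ X) = tr X by rewrite -wpowD.
have sXY : size X = size Y by rewrite eqX !size_cat syy'.
have XY : tr X = tr Y by rewrite eqX; apply: tr_cat_congr.
have ltiX : i < size X by rewrite eqX size_cat ltn_addr.
move: (MN_drop_idempotent sXY XY XX ltiX) => /(MN_catr t).
rewrite {1}eqX /Y !drop_cat syy' ltiy -!catA.
have absorb' p : MN L (p ++ t) (p ++ wpow y k.-1 ++ X ++ t).
  by apply: MN_catl_tr; rewrite catA /X -wpowD tr_wpow_absorb.
move=> MNi; apply: MN_trans (MN_trans (absorb' _) MNi) _.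
exact/MN_sym/absorb'.
Qed.

(* [normal_forms b k] lists words of length [k] of the form
   [y_1 a_1 ... y_r a_r y] with [r <= b], each [y_i] and [y] being the
   [tr_witness] of its length and transformation. *)
Fixpoint normal_forms b k : seq word :=
  [seq tr_witness delta k m | m <- enum M] ++
  if b is b'.+1 then
    flatten [seq [seq tr_witness delta j ya.1 ++ ya.2 :: c
                 | ya <- enum {: M * Sigma}, c <- normal_forms b' (k - j.+1)]
            | j <- iota 0 k]
  else [::].

Lemma tr_witness_normal_form b k m : tr_witness delta k m \in normal_forms b k.
Proof. by case: b => [|b]; rewrite /= mem_cat map_f ?mem_enum. Qed.

Lemma size_normal_forms b k : size (normal_forms b k) <= (#|M| * #|Sigma|.+1 * k.+1) ^ b.+1.
Proof.
elim: b k => [|b IHb] k /=; rewrite size_cat size_map -cardE.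
  by rewrite addn0 expn1 -mulnA leq_pmulr // muln_gt0.
set K := #|M| * #|Sigma|.+1 * k.+1; rewrite expnS; set X := K ^ b.+1.
apply: leq_trans (leq_add (leqnn _) (size_flatten_map_le (B := #|M| * #|Sigma| * X) _)) _.
  move=> j _; rewrite size_allpairs -cardE card_prod leq_mul2l (leq_trans (IHb _)) ?orbT //.
  by rewrite leq_exp2rW // leq_mul2l ltnS leq_subr orbT.
have M_gt0 : 0 < #|M| by rewrite card_ffun expn_gt0; case: #|Q|.
have : #|M| <= #|M| * X by rewrite leq_pmulr // expn_gt0 !muln_gt0 M_gt0.
rewrite size_iota /K; move: #|M| #|Sigma| X => m s x; nia.
Qed.

Lemma absorbed_normal_form b w : tr w = tr [::] ->
  exists2 c, c \in normal_forms b (size w) & approxL L w c /\ tr c = tr w.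
Proof.
move=> absorb; have [sc trc] := tr_witnessP delta w.
set c := tr_witness delta (size w) (tr w) in sc trc *.
exists c; first exact: tr_witness_normal_form.
by split=> //; have := @approx_absorbed w c [::]; rewrite !cats0 => /(_ absorb sc trc).
Qed.

Lemma approx_normal_form b w : #|suffix_trs delta w| <= b.+1 ->
  exists2 c, c \in normal_forms b (size w) & approxL L w c /\ tr c = tr w.
Proof.
elim: b w => [|b IHb] w card_w; case: (absorbing_split delta w) => [absorb | split_w].
- exact: absorbed_normal_form.
- case: split_w => y [a [w' [_ _ lt_w']]].
  by move: (card_suffix_trs_gt0 delta w') lt_w' card_w; lia.
- exact: absorbed_normal_form.
case: split_w => y [a [w' [def_w tra lt_w']]].
have [c' c'_nf [w'c' trc']] := IHb w' (ltnSE (leq_trans lt_w' card_w)).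
have [sy try] := tr_witnessP delta y; set y' := tr_witness delta (size y) (tr y) in sy try *.
exists (y' ++ a :: c'); last split.
- rewrite /= mem_cat; apply/orP; right; apply/flatten_mapP; exists (size y).
    by rewrite mem_iota def_w size_cat /=; lia.
  have -> : size w - (size y).+1 = size w' by rewrite def_w size_cat /=; lia.
  have ya_enum : (tr y, a) \in enum {: M * Sigma} by rewrite mem_enum.
  exact: (allpairs_f (fun ya c => tr_witness delta (size y) ya.1 ++ ya.2 :: c) ya_enum c'_nf).
- apply: approx_trans (_ : approxL L (y' ++ a :: w') _).
    by rewrite def_w; apply: approx_absorbed; rewrite // -def_w tra.
  by rewrite -!cat_rcons; apply: approx_catl_tr.
by rewrite def_w; apply: tr_cat_congr => //; apply: (@tr_cat_congr _ _ _ [:: a] [:: a]).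
Qed.

Lemma no_critical_tuple_poly_bounded : approx_poly_bounded L.
Proof.
exists ((#|M| * #|Sigma|.+1) ^ #|M|.+1), #|M|.+2 => n.
pose C := flatten [seq normal_forms #|M| k | k <- iota 0 n.+1].
apply: (@leq_trans (size C)).
  apply: num_approx_classes_le_cover => w wn.
  have [c c_nf [wc _]] := approx_normal_form (leqW (max_card (suffix_trs delta w))).
  by exists c => //; apply/flatten_mapP; exists (size w); rewrite ?mem_iota ?ltnS.
apply: leq_trans (size_flatten_map_le (B := (#|M| * #|Sigma|.+1 * n.+1) ^ #|M|.+1) _) _.
  move=> k; rewrite mem_iota ltnS => /andP[_ lekn].
  apply: leq_trans (size_normal_forms _ _) _.
  by rewrite leq_exp2rW // leq_mul2l ltnS lekn orbT.
by rewrite size_iota expnMn expnS mulnCA.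
Qed.

End NoCriticalTuple.

Theorem theorem16 (Sigma : finType) (L : pred (seq Sigma)) :
  regular L ->
  [<-> VL_in_O_log L;
       approx_poly_bounded L;
       no_critical_tuple (MN L)].
Proof.
case=> Q [q0 [delta [F dfaL]]]; tfae.
- exact: VL_in_O_log_poly_bounded.
- by move=> poly [u2 [v2 [u [v crit]]]]; exact: critical_tuple_not_poly_bounded crit poly.
- move=> nocrit; apply: poly_bounded_VL_in_O_log.
  exact: no_critical_tuple_poly_bounded dfaL nocrit.
Qed.
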